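(* For every $n>1$, there exists a $\Pi^0_2$ equivalence relation $E$ on $\omega$ which is complete under $\leq_c^n$ among $\Pi^0_2$ equivalence relations, but is not complete under $\leq_c^{n+1}$ among $\Pi^0_2$ equivalence relations.
   Context: For equivalence relations $E,F$ on $\omega$ and $n\ge1$, $F\leq_c^nE$ means there is a total computable function mapping each $(x_0,\dots,x_{n-1})\in\omega^n$ to $(y_0,\dots,y_{n-1})\in\omega^n$ with $x_i\,F\,x_j\iff y_i\,E\,y_j$ for all $i<j<n$. $E$ is complete under $\leq_c^n$ among $\Pi^0_2$ equivalence relations if $E$ is a $\Pi^0_2$ subset of $\omega\times\omega$ and every $\Pi^0_2$ equivalence relation $F$ on $\omega$ satisfies $F\leq_c^nE$. *)

From mathcomp Require Import all_boot.
Set Implicit Arguments. Unset Strict Implicit. Unset Printing Implicit Defensive.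

(* Untyped syntax; arguments are lists of naturals. *)
Inductive rf : Type :=
| rZero : rf
| rSucc : rf
| rProj : nat -> rf               (* i-th argument (0-based) *)
| rComp : rf -> list rf -> rf
| rPrec : rf -> rf -> rf          (* primitive recursion on the first arg *)
| rMu   : rf -> rf.               (* unbounded minimization on the first arg *)

Inductive eval : rf -> seq nat -> nat -> Prop :=
| ev_zero v : eval rZero v 0
| ev_succ x v : eval rSucc (x :: v) x.+1
| ev_proj i v : i < size v -> eval (rProj i) v (nth 0 v i)
| ev_comp f gs v ws y : evals gs v ws -> eval f ws y -> eval (rComp f gs) v y
| ev_prec0 f g v y : eval f v y -> eval (rPrec f g) (0 :: v) y
| ev_precS f g k v z y :
    eval (rPrec f g) (k :: v) z -> eval g (k :: z :: v) y ->
    eval (rPrec f g) (k.+1 :: v) y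
| ev_mu f v k :
    eval f (k :: v) 0 ->
    (forall m, m < k -> exists r, eval f (m :: v) r.+1) ->
    eval (rMu f) v k
with evals : list rf -> seq nat -> seq nat -> Prop :=
| evs_nil v : evals nil v [::]
| evs_cons g gs v w ws : eval g v w -> evals gs v ws -> evals (g :: gs) v (w :: ws).

Definition computable_n (n : nat) (F : seq nat -> nat) : Prop :=
  exists p : rf, forall v : seq nat, size v = n -> eval p v (F v).

Definition Pi02 (A : nat -> nat -> Prop) : Prop :=
  exists R : nat -> nat -> nat -> nat -> bool,
    computable_n 4 (fun v => nat_of_bool (R (nth 0 v 0) (nth 0 v 1) (nth 0 v 2) (nth 0 v 3)))
    /\ forall x y, A x y <-> (forall u, exists w, R x y u w).

Definition is_equivalence (E : nat -> nat -> Prop) : Prop :=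
  (forall x, E x x) /\ (forall x y, E x y -> E y x)
  /\ (forall x y z, E x y -> E y z -> E x z).

(* F <=_c^n E : a total computable map omega^n -> omega^n, given by its n
   components f 0, ..., f (n-1) (each a total computable function of n
   arguments), such that x_i F x_j <-> y_i E y_j for all i < j < n. *)
Definition creduces_n (n : nat) (F E : nat -> nat -> Prop) : Prop :=
  exists f : nat -> seq nat -> nat,
    (forall i, i < n -> computable_n n (f i)) /\
    forall v : seq nat, size v = n ->
      forall i j, i < j -> j < n ->
        (F (nth 0 v i) (nth 0 v j) <-> E (f i v) (f j v)).

Definition complete_n (n : nat) (E : nat -> nat -> Prop) : Prop :=
  Pi02 E /\
  forall F : nat -> nat -> Prop, is_equivalence F -> Pi02 F -> creduces_n n F E.

From mathcomp Require Import all_boot zify.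
From Stdlib Require Import Classical.
Set Implicit Arguments. Unset Strict Implicit. Unset Printing Implicit Defensive.

(* E_n is the identity except on codes <<e, v>, i> with i < n.  A Pi^0_2
   equivalence F whose matrix is decided by the program e reduces to E_n by
   sending an n-tuple v to the points <<e, v>, i>: two of them are E_n-related
   when, at every stage t, i and j are connected in the graph on {0, ..., n-1}
   whose edges are the pairs (a, b) for which "forall u < t, exists w,
   R v_a v_b u w" has been certified by halting computations of e.  As there are
   only finitely many pairs, a stage large enough refutes every pair outside F,
   so connectedness at all stages is exactly F v_i v_j.  Certified halting is
   Sigma^0_1 through codes of derivations of the big-step semantics, which makes
   E_n Pi^0_2.
   Conversely, E_n has no n+1 distinct pairwise related elements, since they
   would share <e, v> and have distinct indices below n.  Given programs
   computing a candidate reduction of (n+1)-tuples, coded by c, let F relate the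
   n+1 points <c, k> exactly when the programs halt on them with pairwise
   distinct outputs.  If they do, the outputs form such a forbidden clique;
   otherwise two outputs coincide, hence are E_n-related, so their inputs are
   F-related and the outputs were distinct after all. *)

(** * Closure properties of computable functions *)

Lemma computable_ext k F G :
  (forall v, size v = k -> F v = G v) -> computable_n k G -> computable_n k F.
Proof. by move=> FG [p Hp]; exists p => v Hv; rewrite FG //; apply: Hp. Qed.

Fixpoint computable_all k (Gs : seq (seq nat -> nat)) : Prop :=
  if Gs is G :: Gs' then computable_n k G /\ computable_all k Gs' else True.

Lemma computable_comp k m F Gs : size Gs = m -> computable_n m F ->
  computable_all k Gs -> computable_n k (fun v => F [seq G v | G <- Gs]).
Proof.
move=> sizeGs [f Hf] HGs.
have [gs Hgs] : exists gs, forall v, size v = k -> evals gs v [seq G v | G <- Gs].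
  elim: Gs HGs {sizeGs} => [_|G Gs IH [[g Hg] /IH [gs Hgs]]].
    by exists nil => v _; constructor.
  by exists (g :: gs) => v Hv; constructor; [apply: Hg | apply: Hgs].
exists (rComp f gs) => v Hv; econstructor; first exact: Hgs.
by apply: Hf; rewrite size_map.
Qed.

Lemma computable_succ k F : computable_n k F -> computable_n k (fun v => (F v).+1).
Proof.
move=> [p Hp]; exists (rComp rSucc [:: p]) => v Hv.
by econstructor; [constructor; [apply: Hp | constructor] | constructor].
Qed.

Lemma computable_const k c : computable_n k (fun _ => c).
Proof.
elim: c => [|c]; last exact: computable_succ.
by exists rZero => v _; constructor.
Qed.

Lemma computable_proj k i : i < k -> computable_n k (fun v => nth 0 v i).
Proof. by move=> ik; exists (rProj i) => v Hv; constructor; rewrite Hv. Qed.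

Fixpoint prim_rec (F : seq nat -> nat) (G : seq nat -> nat) x v :=
  if x is x'.+1 then G (x' :: prim_rec F G x' v :: v) else F v.

Lemma computable_prim_rec k F G : computable_n k F -> computable_n k.+2 G ->
  computable_n k.+1 (fun v => prim_rec F G (head 0 v) (behead v)).
Proof.
move=> [f Hf] [g Hg]; exists (rPrec f g) => [[|x v]] //= [Hv].
elim: x => [|x IH] /=; first by constructor; apply: Hf.
by econstructor; [apply: IH | apply: Hg; rewrite /= Hv].
Qed.

Lemma computable_all_proj k (idx : seq nat) : all (fun i => i < k) idx ->
  computable_all k [seq (fun v => nth 0 v i) | i <- idx].
Proof.
elim: idx => //= i idx IH /andP[ik idxk].
by split; [apply: computable_proj | apply: IH].
Qed.

Lemma computable_reindex k m F (idx : seq nat) : size idx = m ->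
  all (fun i => i < k) idx -> computable_n m F ->
  computable_n k (fun v => F [seq nth 0 v i | i <- idx]).
Proof.
move=> sizeidx idxk HF.
have := @computable_comp k m F [seq (fun v => nth 0 v i) | i <- idx].
rewrite size_map => /(_ sizeidx HF (computable_all_proj idxk)).
by apply: computable_ext => v _; rewrite -map_comp.
Qed.

Lemma all_iota_lt k m n : m + n <= k -> all (fun i => i < k) (iota m n).
Proof. by move=> mnk; apply/allP => i; rewrite mem_iota; lia. Qed.

Lemma computable_behead k F : computable_n k F ->
  computable_n k.+1 (fun w => F (behead w)).
Proof.
move=> HF; have := computable_reindex (size_iota 1 k) (all_iota_lt (leqnn _)) HF.
apply: computable_ext => w sizew; congr F.
by rewrite map_nth_iota ?sizew ?subn1 // drop1 take_oversize // size_behead sizew.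
Qed.

Lemma computable_subst_head k (F : nat -> seq nat -> nat) G :
  computable_n k.+1 (fun w => F (head 0 w) (behead w)) -> computable_n k.+1 G ->
  computable_n k.+1 (fun w => F (G w) (behead w)).
Proof.
move=> HF HG.
have := @computable_comp k.+1 k.+1 (fun w => F (head 0 w) (behead w))
  (G :: [seq (fun v => nth 0 v i) | i <- iota 1 k]).
rewrite /= size_map size_iota => /(_ erefl HF (conj HG (computable_all_proj (all_iota_lt _)))).
move=> /(_ (leqnn _)); apply: computable_ext => w sizew; congr F.
by rewrite -map_comp map_nth_iota ?sizew ?subn1 // drop1 take_oversize // size_behead sizew.
Qed.

Lemma computable_app1 k (op : nat -> nat) F :
  computable_n 1 (fun v => op (nth 0 v 0)) -> computable_n k F ->
  computable_n k (fun v => op (F v)).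
Proof. by move=> Hop HF; apply: (@computable_comp k 1 _ [:: F] erefl Hop). Qed.

Lemma computable_app2 k (op : nat -> nat -> nat) F G :
  computable_n 2 (fun v => op (nth 0 v 0) (nth 0 v 1)) ->
  computable_n k F -> computable_n k G -> computable_n k (fun v => op (F v) (G v)).
Proof. by move=> Hop HF HG; apply: (@computable_comp k 2 _ [:: F; G] erefl Hop). Qed.

Lemma computable_add k F G : computable_n k F -> computable_n k G ->
  computable_n k (fun v => F v + G v).
Proof.
apply: computable_app2.
have := computable_prim_rec (computable_proj (ltn0Sn 0))
  (computable_succ (@computable_proj 3 1 isT)).
by apply: computable_ext => [[|x [|y [|]]]] //= _; elim: x => //= x <-.
Qed.

Lemma computable_mul k F G : computable_n k F -> computable_n k G ->
  computable_n k (fun v => F v * G v).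
Proof.
apply: computable_app2.
have := computable_prim_rec (computable_const 1 0)
  (computable_add (@computable_proj 3 1 isT) (@computable_proj 3 2 isT)).
by apply: computable_ext => [[|x [|y [|]]]] //= _; elim: x => //= x <-; rewrite mulSn addnC.
Qed.

Lemma computable_pred k F : computable_n k F -> computable_n k (fun v => (F v).-1).
Proof.
apply: computable_app1.
have := computable_prim_rec (computable_const 0 0) (@computable_proj 2 0 isT).
by apply: computable_ext => [[|[|x] [|]]].
Qed.

Lemma computable_sub k F G : computable_n k F -> computable_n k G ->
  computable_n k (fun v => F v - G v).
Proof.
apply: computable_app2.
have := computable_prim_rec (computable_proj (ltn0Sn 0))
  (computable_pred (@computable_proj 3 1 isT)).
move/(@computable_reindex 2 2 _ [:: 1; 0] erefl erefl).
by apply: computable_ext => [[|x [|y [|]]]] //= _; elim: y => [|y /= <-]; rewrite ?subn0 ?subnS.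
Qed.

Lemma computable_eq0 k F : computable_n k F -> computable_n k (fun v => F v == 0 : nat).
Proof.
apply: (@computable_app1 k (fun x => x == 0 : nat)).
have := computable_prim_rec (computable_const 0 1) (computable_const 2 0).
by apply: computable_ext => [[|[|x] [|]]].
Qed.

Definition decidable_n k (b : seq nat -> bool) :=
  computable_n k (fun v => nat_of_bool (b v)).

Lemma decidable_eq k F G : computable_n k F -> computable_n k G ->
  decidable_n k (fun v => F v == G v).
Proof.
move=> HF HG; have := computable_eq0 (computable_add (computable_sub HF HG) (computable_sub HG HF)).
by apply: computable_ext => v _; rewrite addn_eq0 !subn_eq0 eqn_leq.
Qed.

Lemma decidable_le k F G : computable_n k F -> computable_n k G ->
  decidable_n k (fun v => F v <= G v).
Proof.
move=> HF HG; have := computable_eq0 (computable_sub HF HG).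
by apply: computable_ext => v _; rewrite subn_eq0.
Qed.

Lemma decidable_not k b : decidable_n k b -> decidable_n k (fun v => ~~ b v).
Proof. by move/computable_eq0; apply: computable_ext => v _; case: (b v). Qed.

Lemma decidable_and k b c : decidable_n k b -> decidable_n k c ->
  decidable_n k (fun v => b v && c v).
Proof.
move=> Hb Hc; have := computable_mul Hb Hc.
by apply: computable_ext => v _; case: (b v); case: (c v).
Qed.

Lemma decidable_or k b c : decidable_n k b -> decidable_n k c ->
  decidable_n k (fun v => b v || c v).
Proof.
move=> Hb Hc; have := decidable_not (decidable_and (decidable_not Hb) (decidable_not Hc)).
by apply: computable_ext => v _; case: (b v); case: (c v).
Qed.

Lemma decidable_implb k b c : decidable_n k b -> decidable_n k c ->
  decidable_n k (fun v => b v ==> c v).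
Proof.
move=> Hb Hc; have := decidable_or (decidable_not Hb) Hc.
by apply: computable_ext => v _; case: (b v).
Qed.

Lemma computable_if k b F G : decidable_n k b -> computable_n k F -> computable_n k G ->
  computable_n k (fun v => if b v then F v else G v).
Proof.
move=> Hb HF HG.
have := computable_add (computable_mul Hb HF) (computable_mul (decidable_not Hb) HG).
by apply: computable_ext => v _; case: (b v) => /=; rewrite ?mul1n ?mul0n ?addn0.
Qed.

Lemma computable_cons_arg k H B : computable_n k.+1 H -> computable_n k B ->
  computable_n k (fun v => H (B v :: v)).
Proof.
move=> HH HB.
have := @computable_comp k k.+1 H (B :: [seq (fun v => nth 0 v i) | i <- iota 0 k]).
rewrite /= size_map size_iota => /(_ erefl HH (conj HB (computable_all_proj (all_iota_lt _)))).
move=> /(_ (leqnn _)); apply: computable_ext => v sizev; congr (H (_ :: _)).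
by rewrite -map_comp map_nth_iota0 ?sizev // -sizev take_size.
Qed.

(** * Bounded sums and quantifiers *)

Lemma computable_sum k B (F : nat -> seq nat -> nat) : computable_n k B ->
  computable_n k.+1 (fun w => F (head 0 w) (behead w)) ->
  computable_n k (fun v => \sum_(0 <= i < B v) F i v).
Proof.
move=> HB HF.
have HG : computable_n k.+2 (fun u => nth 0 u 1 + F (nth 0 u 0) (drop 2 u)).
  apply: computable_add; first exact: computable_proj.
  have := @computable_reindex k.+2 k.+1 (fun w => F (head 0 w) (behead w)) (0 :: iota 2 k).
  rewrite /= size_iota => /(_ erefl (all_iota_lt (leqnn _)) HF).
  apply: computable_ext => u sizeu /=; congr (F _ _).
  by rewrite map_nth_iota ?sizeu ?subSS ?subn0 // take_oversize // size_drop sizeu; lia.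
apply: computable_ext (computable_cons_arg (computable_prim_rec (computable_const k 0) HG) HB).
move=> v _ /=; elim: (B v) => [|m IH] /=; first by rewrite big_geq.
by rewrite big_nat_recr //= IH drop0 addnC.
Qed.

Definition bex n (P : pred nat) := has P (iota 0 n).
Definition ball n (P : pred nat) := all P (iota 0 n).

Lemma bexP n (P : pred nat) : reflect (exists2 i, i < n & P i) (bex n P).
Proof.
apply: (iffP hasP) => [[i] | [i ni Pi]]; last by exists i; rewrite ?mem_iota.
by rewrite mem_iota => ni Pi; exists i.
Qed.

Lemma ballP n (P : pred nat) : reflect (forall i, i < n -> P i) (ball n P).
Proof.
apply: (iffP allP) => Pn i ni; apply: Pn; move: ni; by rewrite mem_iota.
Qed.

Lemma count_iota_sum n (P : pred nat) : count P (iota 0 n) = \sum_(0 <= i < n) P i.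
Proof. by rewrite -sum1_count big_mkcond /index_iota subn0; apply: eq_bigr => i _; case: (P i). Qed.

Lemma decidable_bex k B (P : nat -> seq nat -> bool) : computable_n k B ->
  decidable_n k.+1 (fun w => P (head 0 w) (behead w)) ->
  decidable_n k (fun v => bex (B v) (P^~ v)).
Proof.
move=> HB HP.
have := decidable_le (computable_const k 1) (@computable_sum k B (fun i v => P i v) HB HP).
by apply: computable_ext => v _; rewrite /bex has_count count_iota_sum.
Qed.

Lemma decidable_ball k B (P : nat -> seq nat -> bool) : computable_n k B ->
  decidable_n k.+1 (fun w => P (head 0 w) (behead w)) ->
  decidable_n k (fun v => ball (B v) (P^~ v)).
Proof.
move=> HB /decidable_not HnP.
have := decidable_not (@decidable_bex k B (fun i v => ~~ P i v) HB HnP).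
apply: computable_ext => v _; rewrite /ball /bex -all_predC; congr nat_of_bool.
by apply: eq_all => i /=; rewrite negbK.
Qed.

(** * Cantor pairing *)

Fixpoint triangle s := if s is s'.+1 then triangle s' + s else 0.
Definition npair x y := triangle (x + y) + y.

Lemma leq_triangle s : s <= triangle s.
Proof. by elim: s => //= s IH; lia. Qed.

Lemma triangle_ltn s s' : s < s' -> triangle s + s < triangle s'.
Proof. by elim: s' => // s' IH; rewrite ltnS leq_eqVlt => /orP[/eqP->|/IH] /=; lia. Qed.

Lemma npair_inj x y x' y' : npair x y = npair x' y' -> x = x' /\ y = y'.
Proof.
rewrite /npair => E; case: (ltngtP (x + y) (x' + y')) => s_lt.
- by have := triangle_ltn s_lt; lia.
- by have := triangle_ltn s_lt; lia.
- by rewrite s_lt in E; lia.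
Qed.

Lemma leq_npair_l x y : x <= npair x y.
Proof. by rewrite /npair; have := leq_triangle (x + y); lia. Qed.

Lemma leq_npair_r x y : y <= npair x y.
Proof. by rewrite /npair; lia. Qed.

Lemma npair_surj z : exists x y, npair x y = z.
Proof.
elim: z => [|z [[|x] [y <-]]]; first by exists 0, 0.
  by exists y.+1, 0; rewrite /npair /= !addn0 add0n; lia.
by exists x, y.+1; rewrite /npair (addnS x) addSn addnS.
Qed.

(* Unpairing by bounded search, which makes it visibly computable. *)
Definition unpair_with (g : nat -> nat -> nat) z :=
  \sum_(0 <= i < z.+1) \sum_(0 <= j < z.+1) if npair i j == z then g i j else 0.

Lemma unpair_with_pair g x y : unpair_with g (npair x y) = g x y.
Proof.
have iota_x : x \in index_iota 0 (npair x y).+1 by rewrite mem_index_iota ltnS leq_npair_l.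
have iota_y : y \in index_iota 0 (npair x y).+1 by rewrite mem_index_iota ltnS leq_npair_r.
have uniq_iota m : uniq (index_iota 0 m) by apply: iota_uniq.
rewrite /unpair_with (bigD1_seq x) ?uniq_iota //= [X in _ + X]big1 => [|i ix].
  rewrite addn0 (bigD1_seq y) ?uniq_iota //= eqxx [X in _ + X]big1 ?addn0 // => j jy.
  by case: eqP => // /npair_inj [_ E]; rewrite E eqxx in jy.
by apply: big1 => j _; case: eqP => // /npair_inj [E _]; rewrite E eqxx in ix.
Qed.

Definition nfst := unpair_with (fun i _ => i).
Definition nsnd := unpair_with (fun _ j => j).

Lemma nfst_pair x y : nfst (npair x y) = x. Proof. exact: unpair_with_pair. Qed.
Lemma nsnd_pair x y : nsnd (npair x y) = y. Proof. exact: unpair_with_pair. Qed.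

Lemma npairK z : npair (nfst z) (nsnd z) = z.
Proof. by have [x [y <-]] := npair_surj z; rewrite nfst_pair nsnd_pair. Qed.

Lemma nsnd_le z : nsnd z <= z.
Proof. by rewrite -{2}(npairK z) leq_npair_r. Qed.

Lemma computable_proj_eq k i F : (forall w, F w = nth 0 w i) -> i < k -> computable_n k F.
Proof. by move=> Fi ik; apply: computable_ext (computable_proj ik) => w _; apply: Fi. Qed.

Ltac computable_proj :=
  apply: computable_proj_eq; [move=> ?; rewrite /= -?nth0 ?nth_behead; reflexivity | by []].

Lemma computable_triangle k F : computable_n k F -> computable_n k (fun v => triangle (F v)).
Proof.
apply: computable_app1.
have := computable_prim_rec (computable_const 0 0)
  (computable_add (@computable_proj 2 1 isT) (computable_succ (@computable_proj 2 0 isT))).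
by apply: computable_ext => [[|x [|]]] //= _; elim: x => //= x <-.
Qed.

Lemma computable_npair k F G : computable_n k F -> computable_n k G ->
  computable_n k (fun v => npair (F v) (G v)).
Proof. by move=> HF HG; apply: computable_add (computable_triangle (computable_add HF HG)) HG. Qed.

Lemma computable_unpair_with g k F :
  computable_n 2 (fun v => g (nth 0 v 0) (nth 0 v 1)) -> computable_n k F ->
  computable_n k (fun v => unpair_with g (F v)).
Proof.
move=> Hg; apply: computable_app1; rewrite /unpair_with.
apply: computable_sum; first by apply: computable_succ; computable_proj.
apply: computable_sum; first by apply: computable_succ; computable_proj.
apply: computable_if; last exact: computable_const.
  by apply: decidable_eq; [apply: computable_npair|]; computable_proj.
by apply: computable_app2 Hg _ _; computable_proj.
Qed.

Lemma computable_nfst k F : computable_n k F -> computable_n k (fun v => nfst (F v)).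
Proof. by apply: computable_unpair_with; computable_proj. Qed.

Lemma computable_nsnd k F : computable_n k F -> computable_n k (fun v => nsnd (F v)).
Proof. by apply: computable_unpair_with; computable_proj. Qed.

(** * Codes of finite sequences *)

Definition ccons h t := (npair h t).+1.
Definition chd c := nfst c.-1.
Definition ctl c := nsnd c.-1.
Definition cnth k c := chd (iter k ctl c).

Fixpoint code_seq (s : seq nat) : nat :=
  if s is x :: s' then ccons x (code_seq s') else 0.

Lemma chd0 : chd 0 = 0. Proof. exact: (nfst_pair 0 0). Qed.
Lemma ctl0 : ctl 0 = 0. Proof. exact: (nsnd_pair 0 0). Qed.
Lemma chd_cons h t : chd (ccons h t) = h. Proof. exact: nfst_pair. Qed.
Lemma ctl_cons h t : ctl (ccons h t) = t. Proof. exact: nsnd_pair. Qed.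

Lemma ctl_lt c : c != 0 -> ctl c < c.
Proof. by rewrite /ctl; have := nsnd_le c.-1; lia. Qed.

Lemma cconsK c : c != 0 -> ccons (chd c) (ctl c) = c.
Proof. by case: c => // c _; rewrite /ccons npairK. Qed.

Lemma code_seq_surj c : exists s, code_seq s = c.
Proof.
elim/ltn_ind: c => c IH; case: (eqVneq c 0) => [->|c_neq0]; first by exists [::].
have [s code_s] := IH _ (ctl_lt c_neq0).
by exists (chd c :: s); rewrite /= code_s cconsK.
Qed.

Lemma iter_ctl_code k s : iter k ctl (code_seq s) = code_seq (drop k s).
Proof.
elim: k s => [|k IH] [|x s] //=; first by elim: k {IH} => [|k /= ->]; rewrite ctl0.
by rewrite -iterS iterSr ctl_cons IH.
Qed.

Lemma iter_ctl_code_eq0 k s : (iter k ctl (code_seq s) == 0) = (size s <= k).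
Proof. by rewrite iter_ctl_code -subn_eq0 -size_drop; case: (drop k s). Qed.

Lemma iter_ctl_code_neq0 k s : (iter k ctl (code_seq s) != 0) = (k < size s).
Proof. by rewrite iter_ctl_code_eq0 -ltnNge. Qed.

Lemma cnth_code k s : cnth k (code_seq s) = nth 0 s k.
Proof.
rewrite /cnth iter_ctl_code; case: (ltnP k (size s)) => ks.
  by rewrite (drop_nth 0 ks) chd_cons.
by rewrite drop_oversize // nth_default // chd0.
Qed.

Lemma size_le_code_seq s : size s <= code_seq s.
Proof. by elim: s => //= x s IH; have := leq_npair_r x (code_seq s); rewrite /ccons; lia. Qed.

Definition cexists (Q : pred nat) c := bex c.+1 (fun i => (iter i ctl c != 0) && Q (cnth i c)).
Definition cmem x c := cexists (pred1 x) c.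

Lemma cexists_code Q s : cexists Q (code_seq s) = has Q s.
Proof.
apply/bexP/hasP => [[i _ /andP[]]|[x xs Qx]].
  by rewrite iter_ctl_code_neq0 cnth_code => si Qi; exists (nth 0 s i); rewrite ?mem_nth.
have si : index x s < size s by rewrite index_mem.
exists (index x s); first by have := size_le_code_seq s; lia.
by rewrite iter_ctl_code_neq0 cnth_code nth_index ?si.
Qed.

Lemma cmem_code x s : cmem x (code_seq s) = (x \in s).
Proof. by rewrite /cmem cexists_code has_pred1. Qed.

Lemma computable_chd k F : computable_n k F -> computable_n k (fun v => chd (F v)).
Proof. by move=> HF; apply/computable_nfst/computable_pred. Qed.

Lemma computable_ctl k F : computable_n k F -> computable_n k (fun v => ctl (F v)).
Proof. by move=> HF; apply/computable_nsnd/computable_pred. Qed.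

Lemma computable_ccons k F G : computable_n k F -> computable_n k G ->
  computable_n k (fun v => ccons (F v) (G v)).
Proof. by move=> HF HG; apply/computable_succ/computable_npair. Qed.

Lemma computable_iter_ctl k F G : computable_n k F -> computable_n k G ->
  computable_n k (fun v => iter (F v) ctl (G v)).
Proof.
apply: (@computable_app2 k (fun a b => iter a ctl b)).
have := computable_prim_rec (computable_proj (ltn0Sn 0))
  (computable_ctl (@computable_proj 3 1 isT)).
by apply: computable_ext => [[|x [|y [|]]]] //= _; elim: x => //= x ->.
Qed.

Lemma computable_cnth k F G : computable_n k F -> computable_n k G ->
  computable_n k (fun v => cnth (F v) (G v)).
Proof. by move=> HF HG; apply/computable_chd/computable_iter_ctl. Qed.

Lemma decidable_cexists k c (Q : nat -> seq nat -> bool) : computable_n k c ->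
  decidable_n k.+1 (fun w => Q (head 0 w) (behead w)) ->
  decidable_n k (fun v => cexists (Q^~ v) (c v)).
Proof.
move=> Hc HQ; apply: decidable_bex; first exact: computable_succ.
have Hc' := computable_behead Hc.
apply: decidable_and.
  apply/decidable_not/decidable_eq/computable_const.
  by apply: computable_iter_ctl; first computable_proj.
have := @computable_subst_head k (fun a b => nat_of_bool (Q a b))
  (fun w => cnth (head 0 w) (c (behead w))) HQ.
by apply; apply: computable_cnth; first computable_proj.
Qed.

Lemma decidable_cmem k F c : computable_n k F -> computable_n k c ->
  decidable_n k (fun v => cmem (F v) (c v)).
Proof.
move=> HF Hc; apply: (@decidable_cexists k c (fun q v => q == F v)) => //.
by apply: decidable_eq; [computable_proj | apply: computable_behead].
Qed.

Lemma computable_code_seq k : computable_n k code_seq.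
Proof.
suff drop_code m : m <= k -> computable_n k (fun v => code_seq (drop (k - m) v)).
  by apply: computable_ext (drop_code k (leqnn k)) => v _; rewrite subnn drop0.
elim: m => [_|m IH km].
  by apply: computable_ext (computable_const k 0) => v sizev; rewrite subn0 drop_oversize ?sizev.
have kmk : k - m.+1 < k by lia.
apply: computable_ext (computable_ccons (computable_proj kmk) (IH (ltnW km))) => v sizev.
by rewrite (drop_nth 0) ?sizev //=; congr (ccons _ (code_seq (drop _ v))); lia.
Qed.

Ltac computable_step :=
  match goal with
  | |- computable_n _ (fun v => nat_of_bool (_ && _)) => apply: decidable_and
  | |- computable_n _ (fun v => nat_of_bool (_ || _)) => apply: decidable_or
  | |- computable_n _ (fun v => nat_of_bool (_ ==> _)) => apply: decidable_implb
  | |- computable_n _ (fun v => nat_of_bool (~~ _)) => apply: decidable_not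
  | |- computable_n _ (fun v => nat_of_bool (_ == _)) => apply: decidable_eq
  | |- computable_n _ (fun v => nat_of_bool (_ <= _)) => apply: decidable_le
  | |- computable_n _ (fun v => nat_of_bool (bex _ _)) => apply: decidable_bex
  | |- computable_n _ (fun v => nat_of_bool (ball _ _)) => apply: decidable_ball
  | |- computable_n _ (fun v => nat_of_bool (cexists _ _)) => apply: decidable_cexists
  | |- computable_n _ (fun v => nat_of_bool (cmem _ _)) => apply: decidable_cmem
  | |- computable_n _ (fun v => _.+1) => apply: computable_succ
  | |- computable_n _ (fun v => _.-1) => apply: computable_pred
  | |- computable_n _ (fun v => npair _ _) => apply: computable_npair
  | |- computable_n _ (fun v => nfst _) => apply: computable_nfst
  | |- computable_n _ (fun v => nsnd _) => apply: computable_nsnd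
  | |- computable_n _ (fun v => chd _) => apply: computable_chd
  | |- computable_n _ (fun v => ctl _) => apply: computable_ctl
  | |- computable_n _ (fun v => ccons _ _) => apply: computable_ccons
  | |- computable_n _ (fun v => cnth _ _) => apply: computable_cnth
  | |- computable_n _ (fun v => iter _ ctl _) => apply: computable_iter_ctl
  | |- computable_n _ (fun v => nth 0 _ _) => computable_proj
  | |- computable_n _ (fun v => head 0 _) => computable_proj
  | |- computable_n _ (head 0) => computable_proj
  | |- computable_n _ (fun v => _) => apply: computable_const
  end.

Ltac computable_with extra := repeat (rewrite /decidable_n; first [extra | computable_step]).
Ltac computable := computable_with fail.

(** * Mutual induction on evaluations *)

(* The automatically generated scheme gives no hypothesis for the premises of
   [ev_mu], which are nested under an existential. *)
Section EvalInduction.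
Variables (P : rf -> seq nat -> nat -> Prop) (Q : list rf -> seq nat -> seq nat -> Prop).
Hypotheses
  (Pzero : forall v, P rZero v 0)
  (Psucc : forall x v, P rSucc (x :: v) x.+1)
  (Pproj : forall i v, i < size v -> P (rProj i) v (nth 0 v i))
  (Pcomp : forall f gs v ws y, evals gs v ws -> Q gs v ws -> eval f ws y -> P f ws y ->
     P (rComp f gs) v y)
  (Pprec0 : forall f g v y, eval f v y -> P f v y -> P (rPrec f g) (0 :: v) y)
  (PprecS : forall f g k v z y, eval (rPrec f g) (k :: v) z -> P (rPrec f g) (k :: v) z ->
     eval g (k :: z :: v) y -> P g (k :: z :: v) y -> P (rPrec f g) (k.+1 :: v) y)
  (Pmu : forall f v k, eval f (k :: v) 0 -> P f (k :: v) 0 ->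
     (forall m, m < k -> exists r, eval f (m :: v) r.+1 /\ P f (m :: v) r.+1) ->
     P (rMu f) v k)
  (Qnil : forall v, Q nil v [::])
  (Qcons : forall g gs v w ws, eval g v w -> P g v w -> evals gs v ws -> Q gs v ws ->
     Q (g :: gs) v (w :: ws)).

Fixpoint eval_mut_ind p v y (H : eval p v y) {struct H} : P p v y :=
  match H in eval p v y return P p v y with
  | ev_zero v => Pzero v
  | ev_succ x v => Psucc x v
  | ev_proj i v iv => Pproj iv
  | ev_comp f gs v ws y Hgs Hf => Pcomp Hgs (evals_mut_ind Hgs) Hf (eval_mut_ind Hf)
  | ev_prec0 f g v y Hf => Pprec0 g Hf (eval_mut_ind Hf)
  | ev_precS f g k v z y Hk Hg => PprecS Hk (eval_mut_ind Hk) Hg (eval_mut_ind Hg)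
  | ev_mu f v k Hk Hlt => Pmu Hk (eval_mut_ind Hk)
      (fun m mk => let: ex_intro r Hr := Hlt m mk in ex_intro _ r (conj Hr (eval_mut_ind Hr)))
  end
with evals_mut_ind gs v ws (H : evals gs v ws) {struct H} : Q gs v ws :=
  match H in evals gs v ws return Q gs v ws with
  | evs_nil v => Qnil v
  | evs_cons g gs v w ws Hg Hgs => Qcons Hg (eval_mut_ind Hg) Hgs (evals_mut_ind Hgs)
  end.

Lemma eval_evals_ind :
  (forall p v y, eval p v y -> P p v y) /\ (forall gs v ws, evals gs v ws -> Q gs v ws).
Proof. by split; [apply: eval_mut_ind | apply: evals_mut_ind]. Qed.
End EvalInduction.

Lemma eval_evals_det :
  (forall p v y, eval p v y -> forall y', eval p v y' -> y = y') /\
  (forall gs v ws, evals gs v ws -> forall ws', evals gs v ws' -> ws = ws').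
Proof.
apply: eval_evals_ind.
- by move=> v y' H; inversion H.
- by move=> x v y' H; inversion H.
- by move=> i v _ y' H; inversion H.
- move=> f gs v ws y _ IHgs _ IHf y' H; inversion H; subst.
  match goal with Hx : evals gs v ?w |- _ => have E := IHgs _ Hx end; subst.
  exact: IHf.
- by move=> f g v y _ IH y' H; inversion H; subst; apply: IH.
- move=> f g k v z y _ IHk _ IHg y' H; inversion H; subst.
  match goal with Hx : eval (rPrec f g) (k :: v) ?w |- _ => have E := IHk _ Hx end; subst.
  exact: IHg.
- move=> f v k _ IHk IHlt k' H; inversion H; subst.
  case: (ltngtP k k') => kk' //.
  + match goal with Hx : forall m, is_true (m < k') -> _ |- _ => have [r Hr] := Hx _ kk' end.
    by have := IHk _ Hr.
  + have [r [_ Hr]] := IHlt _ kk'.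
    match goal with Hx : eval f (k' :: v) 0 |- _ => by have := Hr _ Hx end.
- by move=> v ws' H; inversion H.
- move=> g gs v w ws _ IHg _ IHgs ws' H; inversion H; subst.
  match goal with Hx : eval g v ?a, Hy : evals gs v ?b |- _ =>
    by rewrite (IHg _ Hx) (IHgs _ Hy) end.
Qed.

Lemma eval_det p v y y' : eval p v y -> eval p v y' -> y = y'.
Proof. by move=> H; apply: (proj1 eval_evals_det) p v y H y'. Qed.

(** * Derivations of evaluation judgments *)

Fixpoint rf_code (p : rf) : nat :=
  match p with
  | rZero => npair 0 0
  | rSucc => npair 1 0
  | rProj i => npair 2 i
  | rComp f gs => npair 3 (npair (rf_code f) (code_seq (map rf_code gs)))
  | rPrec f g => npair 4 (npair (rf_code f) (rf_code g))
  | rMu f => npair 5 (rf_code f)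
  end.

(* [judgment 0 p v y] codes [eval p v y]; [judgment 1 gs v ys] codes [evals gs v ys]. *)
Definition judgment t a b y := npair t (npair a (npair b y)).
Definition jkind j := nfst j.
Definition jprog j := nfst (nsnd j).
Definition jinput j := nfst (nsnd (nsnd j)).
Definition joutput j := nsnd (nsnd (nsnd j)).

Lemma jkind_judgment t a b y : jkind (judgment t a b y) = t.
Proof. by rewrite /jkind nfst_pair. Qed.
Lemma jprog_judgment t a b y : jprog (judgment t a b y) = a.
Proof. by rewrite /jprog nsnd_pair nfst_pair. Qed.
Lemma jinput_judgment t a b y : jinput (judgment t a b y) = b.
Proof. by rewrite /jinput !nsnd_pair nfst_pair. Qed.
Lemma joutput_judgment t a b y : joutput (judgment t a b y) = y.
Proof. by rewrite /joutput !nsnd_pair. Qed.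

Definition judgmentE :=
  (jkind_judgment, jprog_judgment, jinput_judgment, joutput_judgment).

(* One rule per constructor of [eval] and [evals], read bottom-up on codes;
   [ex Q] asserts that some available premise satisfies [Q]. *)
Section Rules.
Variables (ex : pred nat -> bool) (j : nat).
Local Notation p := (jprog j).
Local Notation v := (jinput j).
Local Notation y := (joutput j).

Definition rule_zero := (p == npair 0 0) && (y == 0).
Definition rule_succ := [&& p == npair 1 0, v != 0 & y == (chd v).+1].
Definition rule_proj := [&& nfst p == 2, iter (nsnd p) ctl v != 0 & y == cnth (nsnd p) v].
Definition rule_comp := (nfst p == 3) && ex (fun q =>
  [&& jkind q == 1, jprog q == nsnd (nsnd p), jinput q == v
    & ex (pred1 (judgment 0 (nfst (nsnd p)) (joutput q) y))]).
Definition rule_prec0 := [&& nfst p == 4, v != 0, chd v == 0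
  & ex (pred1 (judgment 0 (nfst (nsnd p)) (ctl v) y))].
Definition rule_precS := [&& nfst p == 4, v != 0, chd v != 0 & ex (fun q =>
  [&& jkind q == 0, jprog q == p, jinput q == ccons (chd v).-1 (ctl v)
    & ex (pred1 (judgment 0 (nsnd (nsnd p)) (ccons (chd v).-1 (ccons (joutput q) (ctl v))) y))])].
Definition rule_mu := [&& nfst p == 5, ex (pred1 (judgment 0 (nsnd p) (ccons y v) 0))
  & ball y (fun m => ex (fun q =>
      [&& jkind q == 0, jprog q == nsnd p, jinput q == ccons m v & joutput q != 0]))].
Definition rule_nil := (p == 0) && (y == 0).
Definition rule_cons := [&& p != 0, y != 0, ex (pred1 (judgment 0 (chd p) v (chd y)))
  & ex (pred1 (judgment 1 (ctl p) v (ctl y)))].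

Definition justified :=
  (jkind j == 0) && [|| rule_zero, rule_succ, rule_proj, rule_comp, rule_prec0, rule_precS
                      | rule_mu]
  || (jkind j == 1) && (rule_nil || rule_cons).
End Rules.

Fixpoint derivation (s : seq nat) : bool :=
  if s is j :: s' then justified (has^~ s') j && derivation s' else true.

Definition derivation_code d :=
  ball d.+1 (fun k => (iter k ctl d != 0) ==>
    justified (cexists^~ (ctl (iter k ctl d))) (chd (iter k ctl d))).

Definition halts c v y := exists d, derivation_code d && cmem (judgment 0 c v y) d.

Lemma implb_andb a b a' b' : a ==> a' -> b ==> b' -> (a && b) ==> (a' && b').
Proof. by case: a; case: b; case: a'; case: b'. Qed.

Lemma implb_orb a b a' b' : a ==> a' -> b ==> b' -> (a || b) ==> (a' || b').
Proof. by case: a; case: b; case: a'; case: b'. Qed.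

Lemma implb_ball n P P' : (forall m, P m ==> P' m) -> ball n P ==> ball n P'.
Proof.
by move=> PP'; apply/implyP => /ballP Pn; apply/ballP => m mn; apply: (implyP (PP' m)); apply: Pn.
Qed.

Lemma justified_mono (ex1 ex2 : pred nat -> bool) j :
  (forall Q Q', (forall q, Q q ==> Q' q) -> ex1 Q ==> ex2 Q') ->
  justified ex1 j ==> justified ex2 j.
Proof.
move=> ex12; rewrite /justified /rule_zero /rule_succ /rule_proj /rule_comp /rule_prec0.
rewrite /rule_precS /rule_mu /rule_nil /rule_cons.
repeat match goal with
 | |- is_true (?a ==> ?a) => exact: implybb
 | |- is_true ((_ && _) ==> (_ && _)) => apply: implb_andb
 | |- is_true ((_ || _) ==> (_ || _)) => apply: implb_orb
 | |- is_true (ball _ _ ==> ball _ _) => apply: implb_ball => ?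
 | |- is_true (ex1 _ ==> ex2 _) => apply: (ex12) => ?
 end.
Qed.

Lemma has_implb (s t : seq nat) (Q Q' : pred nat) : {subset s <= t} ->
  (forall q, Q q ==> Q' q) -> has Q s ==> has Q' t.
Proof.
move=> st QQ'; apply/implyP => /hasP [q qs Qq]; apply/hasP.
by exists q; [apply: st | apply: (implyP (QQ' q))].
Qed.

Lemma justified_code s j : justified (cexists^~ (code_seq s)) j = justified (has^~ s) j.
Proof.
by apply/idP/idP; apply/implyP/justified_mono => Q Q' QQ';
  rewrite cexists_code; apply: has_implb.
Qed.

Lemma derivationP s : reflect
  (forall k, k < size s -> justified (has^~ (drop k.+1 s)) (nth 0 s k)) (derivation s).
Proof.
elim: s => [|j s IH] /=; first by constructor.
apply: (iffP andP) => [[js /IH ds] [_|k ks] //|ds]; first by rewrite drop0.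
  exact: ds.
by split; [have := ds 0 isT; rewrite drop0 | apply/IH => k; apply: (ds k.+1)].
Qed.

Lemma derivation_code_seq s : derivation_code (code_seq s) = derivation s.
Proof.
apply/ballP/derivationP => [ds k ks|ds k _].
  have /implyP := ds k (ltnW (leq_trans ks (size_le_code_seq s))).
  rewrite iter_ctl_code_neq0 ks iter_ctl_code (drop_nth 0 ks) chd_cons ctl_cons.
  by rewrite justified_code; apply.
apply/implyP; rewrite iter_ctl_code_neq0 => ks.
by rewrite iter_ctl_code (drop_nth 0 ks) chd_cons ctl_cons justified_code; apply: ds.
Qed.

Lemma derivation_cat s1 s2 : derivation s1 -> derivation s2 -> derivation (s1 ++ s2).
Proof.
elim: s1 => //= j s1 IH /andP[js1 ds1] ds2; rewrite IH // andbT.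
apply: (implyP (justified_mono _ _) js1) => Q Q'.
by apply: has_implb => q; rewrite mem_cat => ->.
Qed.

Lemma decidable_justified_code k F G : computable_n k F -> computable_n k G ->
  decidable_n k (fun v => justified (cexists^~ (G v)) (F v)).
Proof.
apply: (@computable_app2 k (fun a b => nat_of_bool (justified (cexists^~ b) a))).
rewrite /justified /rule_zero /rule_succ /rule_proj /rule_comp /rule_prec0 /rule_precS.
rewrite /rule_mu /rule_nil /rule_cons /jkind /jprog /jinput /joutput /judgment.
computable.
Qed.

Lemma decidable_derivation_code k F : computable_n k F ->
  decidable_n k (fun v => derivation_code (F v)).
Proof.
apply: (@computable_app1 k (fun a => nat_of_bool (derivation_code a))).
by rewrite /derivation_code; computable_with ltac:(apply: decidable_justified_code).
Qed.

Definition sound_eval j := forall p v,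
  rf_code p = jprog j -> code_seq v = jinput j -> eval p v (joutput j).
Definition sound_evals j := forall gs v,
  code_seq (map rf_code gs) = jprog j -> code_seq v = jinput j ->
  exists2 ws, code_seq ws = joutput j & evals gs v ws.
Definition sound_judgment j := (jkind j = 0 -> sound_eval j) /\ (jkind j = 1 -> sound_evals j).

Lemma rf_code_tag p : nfst (rf_code p) =
  match p with
  | rZero => 0 | rSucc => 1 | rProj _ => 2 | rComp _ _ => 3 | rPrec _ _ => 4 | rMu _ => 5
  end.
Proof. by case: p => *; rewrite /= nfst_pair. Qed.

Section Soundness.
Variable s : seq nat.
Hypothesis s_sound : {in s, forall q, sound_judgment q}.

Lemma premise_eval a b y p v : judgment 0 a b y \in s ->
  rf_code p = a -> code_seq v = b -> eval p v y.
Proof.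
move=> /s_sound [sound0 _] code_p code_v.
by have := sound0 (jkind_judgment _ _ _ _) p v; rewrite !judgmentE; apply.
Qed.

Lemma premise_evals a b ys gs v : judgment 1 a b ys \in s ->
  code_seq (map rf_code gs) = a -> code_seq v = b -> exists2 ws, code_seq ws = ys & evals gs v ws.
Proof.
move=> /s_sound [_ sound1] code_gs code_v.
by have := sound1 (jkind_judgment _ _ _ _) gs v; rewrite !judgmentE; apply.
Qed.

Local Notation ex := (fun Q => has Q s).

Lemma rule_zero_sound j : rule_zero j -> sound_eval j.
Proof.
rewrite /sound_eval => /andP[/eqP -> /eqP ->] p v /(f_equal nfst).
by rewrite rf_code_tag nfst_pair; case: p => // _ _; constructor.
Qed.

Lemma rule_succ_sound j : rule_succ j -> sound_eval j.
Proof.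
rewrite /sound_eval => /and3P[/eqP -> v_neq0 /eqP ->] p v /(f_equal nfst).
rewrite rf_code_tag nfst_pair; case: p => // _ code_v.
by move: v_neq0; rewrite -code_v; case: v {code_v} => //= x v _; rewrite chd_cons; constructor.
Qed.

Lemma rule_proj_sound j : rule_proj j -> sound_eval j.
Proof.
rewrite /sound_eval => /and3P[/eqP tag_j nth_j /eqP ->] p v code_p code_v.
move: tag_j nth_j; rewrite -code_p -code_v rf_code_tag; case: p {code_p} => //= i _.
by rewrite nsnd_pair iter_ctl_code_neq0 cnth_code => iv; constructor.
Qed.

Lemma rule_comp_sound j : rule_comp ex j -> sound_eval j.
Proof.
rewrite /sound_eval /rule_comp /= => /andP[/eqP tag_j].
move=> /hasP[q qs /and4P[/eqP kind_q /eqP prog_q /eqP input_q]].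
rewrite has_pred1 => f_s p v code_p code_v.
move: tag_j prog_q f_s; rewrite -code_p rf_code_tag; case: p {code_p} => //= f gs _.
rewrite !nsnd_pair nfst_pair => prog_q f_s.
have [_ sound1] := s_sound qs.
have [ws code_ws Hgs] := sound1 kind_q gs v (esym prog_q) (etrans code_v (esym input_q)).
by econstructor; [apply: Hgs | apply: premise_eval f_s erefl code_ws].
Qed.

Lemma rule_prec0_sound j : rule_prec0 ex j -> sound_eval j.
Proof.
rewrite /sound_eval /rule_prec0 /= => /and4P[/eqP tag_j v_neq0 /eqP hd_v].
rewrite has_pred1 => f_s p v code_p code_v.
move: tag_j v_neq0 hd_v f_s; rewrite -code_p -code_v rf_code_tag.
case: p {code_p} => //= f g _; case: v {code_v} => [//|[|x] v] _ /=; rewrite chd_cons // => _.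
by rewrite ctl_cons nsnd_pair nfst_pair => f_s; constructor; apply: premise_eval f_s erefl erefl.
Qed.

Lemma rule_precS_sound j : rule_precS ex j -> sound_eval j.
Proof.
rewrite /sound_eval /rule_precS /= => /and4P[/eqP tag_j v_neq0 hd_v].
move=> /hasP[q qs /and4P[/eqP kind_q /eqP prog_q /eqP input_q]].
rewrite has_pred1 => g_s p v code_p code_v.
move: tag_j prog_q v_neq0 hd_v input_q g_s; rewrite -code_p -code_v rf_code_tag.
case: p {code_p} => //= f g _ prog_q.
case: v {code_v} => [//|[|x] v] _ /=; rewrite chd_cons // => _.
rewrite ctl_cons !nsnd_pair => input_q g_s; have [sound0 _] := s_sound qs.
econstructor; first exact: sound0 kind_q (rPrec f g) (x :: v) (esym prog_q) (esym input_q).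
exact: (premise_eval g_s erefl (erefl : code_seq [:: x, joutput q & v] = _)).
Qed.

Lemma rule_mu_sound j : rule_mu ex j -> sound_eval j.
Proof.
rewrite /sound_eval /rule_mu /= => /and3P[/eqP tag_j].
rewrite has_pred1 => f_s /ballP below p v code_p code_v.
move: tag_j f_s below; rewrite -code_p -code_v rf_code_tag.
case: p {code_p} => //= f _; rewrite nsnd_pair => f_s below.
constructor; first exact: (premise_eval (v := joutput j :: v) f_s erefl erefl).
move=> m /below /hasP[q qs /and4P[/eqP kind_q /eqP prog_q /eqP input_q q_neq0]].
have [sound0 _] := s_sound qs; exists (joutput q).-1; rewrite prednK ?lt0n //.
exact: sound0 kind_q f (m :: v) (esym prog_q) (esym input_q).
Qed.

Lemma rule_nil_sound j : rule_nil j -> sound_evals j.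
Proof.
rewrite /sound_evals => /andP[/eqP -> /eqP ->] [|g gs] v //= _ _.
by exists [::] => //; constructor.
Qed.

Lemma rule_cons_sound j : rule_cons ex j -> sound_evals j.
Proof.
rewrite /sound_evals /rule_cons /= => /and4P[p_neq0 y_neq0].
rewrite !has_pred1 => g_s gs_s [|g gs] v code_gs code_v.
  by move: p_neq0; rewrite -code_gs.
move: g_s gs_s; rewrite -code_gs /= chd_cons ctl_cons => g_s gs_s.
have [ws code_ws Hgs] := premise_evals gs_s erefl code_v.
exists (chd (joutput j) :: ws); first by rewrite /= code_ws cconsK.
by constructor; first exact: premise_eval g_s erefl code_v.
Qed.

Lemma justified_sound j : justified ex j -> sound_judgment j.
Proof.
case/orP=> /andP[/eqP kind_j rules]; split=> kind_j'; rewrite kind_j // in kind_j'.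
  move: rules => /orP[/rule_zero_sound|/orP[/rule_succ_sound|/orP[/rule_proj_sound|/orP[
    /rule_comp_sound|/orP[/rule_prec0_sound|/orP[/rule_precS_sound|/rule_mu_sound]]]]]] //.
by move: rules => /orP[/rule_nil_sound|/rule_cons_sound].
Qed.
End Soundness.

Lemma derivation_sound s : derivation s -> {in s, forall q, sound_judgment q}.
Proof.
elim: s => //= j s IH /andP[js /IH s_sound] q.
by rewrite in_cons => /orP[/eqP ->|]; [apply: justified_sound js | apply: s_sound].
Qed.

Lemma halts_sound p v y : halts (rf_code p) (code_seq v) y -> eval p v y.
Proof.
case=> d /andP[]; have [s <-] := code_seq_surj d.
rewrite derivation_code_seq cmem_code => /derivation_sound s_sound js.
exact: (premise_eval s_sound js (erefl (rf_code p)) (erefl (code_seq v))).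
Qed.

Section Completeness.
Variable s : seq nat.
Local Notation ex := (fun Q => has Q s).

Lemma justified_zero cv : justified ex (judgment 0 (npair 0 0) cv 0).
Proof. by rewrite /justified /rule_zero !judgmentE !eqxx. Qed.

Lemma justified_succ x cv : justified ex (judgment 0 (npair 1 0) (ccons x cv) x.+1).
Proof.
suff succ_j : rule_succ (judgment 0 (npair 1 0) (ccons x cv) x.+1).
  by rewrite /justified jkind_judgment succ_j orbT.
by rewrite /rule_succ !judgmentE chd_cons !eqxx.
Qed.

Lemma justified_proj i cv : iter i ctl cv != 0 ->
  justified ex (judgment 0 (npair 2 i) cv (cnth i cv)).
Proof.
move=> icv; suff proj_j : rule_proj (judgment 0 (npair 2 i) cv (cnth i cv)).
  by rewrite /justified jkind_judgment proj_j !orbT.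
by rewrite /rule_proj !judgmentE nfst_pair nsnd_pair icv !eqxx.
Qed.

Lemma justified_comp cf cgs cv cws y : judgment 1 cgs cv cws \in s ->
  judgment 0 cf cws y \in s -> justified ex (judgment 0 (npair 3 (npair cf cgs)) cv y).
Proof.
move=> gs_s f_s; suff comp_j : rule_comp ex (judgment 0 (npair 3 (npair cf cgs)) cv y).
  by rewrite /justified jkind_judgment comp_j !orbT.
rewrite /rule_comp !judgmentE nfst_pair !nsnd_pair nfst_pair /=.
by apply/hasP; exists (judgment 1 cgs cv cws); rewrite // !judgmentE has_pred1 !eqxx.
Qed.

Lemma justified_prec0 cf cg cv y : judgment 0 cf cv y \in s ->
  justified ex (judgment 0 (npair 4 (npair cf cg)) (ccons 0 cv) y).
Proof.
move=> f_s; suff prec0_j : rule_prec0 ex (judgment 0 (npair 4 (npair cf cg)) (ccons 0 cv) y).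
  by rewrite /justified jkind_judgment prec0_j !orbT.
by rewrite /rule_prec0 !judgmentE nfst_pair !nsnd_pair nfst_pair chd_cons ctl_cons /= has_pred1.
Qed.

Lemma justified_precS cf cg k cv z y :
  judgment 0 (npair 4 (npair cf cg)) (ccons k cv) z \in s ->
  judgment 0 cg (ccons k (ccons z cv)) y \in s ->
  justified ex (judgment 0 (npair 4 (npair cf cg)) (ccons k.+1 cv) y).
Proof.
move=> prec_s g_s.
suff precS_j : rule_precS ex (judgment 0 (npair 4 (npair cf cg)) (ccons k.+1 cv) y).
  by rewrite /justified jkind_judgment precS_j !orbT.
rewrite /rule_precS !judgmentE nfst_pair !nsnd_pair chd_cons ctl_cons /=.
apply/hasP; exists (judgment 0 (npair 4 (npair cf cg)) (ccons k cv) z) => //.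
by rewrite !judgmentE has_pred1 !eqxx.
Qed.

Lemma justified_mu cf cv k : judgment 0 cf (ccons k cv) 0 \in s ->
  (forall m, m < k -> exists r, judgment 0 cf (ccons m cv) r.+1 \in s) ->
  justified ex (judgment 0 (npair 5 cf) cv k).
Proof.
move=> f_s below; suff mu_j : rule_mu ex (judgment 0 (npair 5 cf) cv k).
  by rewrite /justified jkind_judgment mu_j !orbT.
rewrite /rule_mu !judgmentE nfst_pair nsnd_pair has_pred1 f_s /=.
apply/ballP => m /below [r r_s].
by apply/hasP; exists (judgment 0 cf (ccons m cv) r.+1); rewrite // !judgmentE !eqxx.
Qed.

Lemma justified_nil cv : justified ex (judgment 1 0 cv 0).
Proof. by rewrite /justified /rule_nil !judgmentE !eqxx. Qed.

Lemma justified_cons cg cgs cv w cws : judgment 0 cg cv w \in s ->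
  judgment 1 cgs cv cws \in s -> justified ex (judgment 1 (ccons cg cgs) cv (ccons w cws)).
Proof.
move=> g_s gs_s; suff cons_j : rule_cons ex (judgment 1 (ccons cg cgs) cv (ccons w cws)).
  by rewrite /justified jkind_judgment cons_j orbT.
by rewrite /rule_cons !judgmentE !chd_cons !ctl_cons /= !has_pred1 g_s gs_s.
Qed.
End Completeness.

Definition derivable j := exists2 s, derivation s & j \in s.

Lemma derivable_justified s j : derivation s -> justified (has^~ s) j -> derivable j.
Proof. by move=> ds js; exists (j :: s); rewrite ?mem_head //= js ds. Qed.

Lemma derivable2 j1 j2 : derivable j1 -> derivable j2 ->
  exists2 s, derivation s & (j1 \in s) && (j2 \in s).
Proof.
move=> [s1 ds1 j1s1] [s2 ds2 j2s2]; exists (s1 ++ s2); first exact: derivation_cat.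
by rewrite !mem_cat j1s1 j2s2 orbT.
Qed.

Lemma derivation_collect (X : nat -> nat -> nat) k :
  (forall m, m < k -> exists r, derivable (X m r)) ->
  exists2 s, derivation s & forall m, m < k -> exists r, X m r \in s.
Proof.
elim: k => [|k IH] derivable_X; first by exists [::].
have [s ds s_X] := IH (fun m mk => derivable_X m (ltnW mk)).
have [r [s' ds' X_s']] := derivable_X k (ltnSn _).
exists (s ++ s'); first exact: derivation_cat.
move=> m; rewrite ltnS leq_eqVlt => /orP[/eqP->|mk]; first by exists r; rewrite mem_cat X_s' orbT.
by have [r' X_s] := s_X m mk; exists r'; rewrite mem_cat X_s.
Qed.

Lemma eval_evals_derivable :
  (forall p v y, eval p v y -> derivable (judgment 0 (rf_code p) (code_seq v) y)) /\
  (forall gs v ws, evals gs v ws ->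
     derivable (judgment 1 (code_seq (map rf_code gs)) (code_seq v) (code_seq ws))).
Proof.
apply: eval_evals_ind.
- by move=> v; apply: (@derivable_justified [::]) => //; apply: justified_zero.
- by move=> x v; apply: (@derivable_justified [::]) => //; apply: justified_succ.
- move=> i v iv; rewrite -cnth_code; apply: (@derivable_justified [::]) => //.
  by apply: justified_proj; rewrite iter_ctl_code_neq0.
- move=> f gs v ws y _ gs_d _ f_d; have [s ds /andP[gs_s f_s]] := derivable2 gs_d f_d.
  by apply: (derivable_justified ds); apply: justified_comp gs_s f_s.
- move=> f g v y _ [s ds f_s].
  by apply: (derivable_justified ds); apply: justified_prec0 f_s.
- move=> f g k v z y _ prec_d _ g_d; have [s ds /andP[prec_s g_s]] := derivable2 prec_d g_d.
  by apply: (derivable_justified ds); apply: justified_precS prec_s g_s.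
- move=> f v k _ [s1 ds1 f_s1] below.
  have [s ds below_s] := @derivation_collect
    (fun m r => judgment 0 (rf_code f) (code_seq (m :: v)) r.+1) k
    (fun m mk => let: ex_intro r (conj _ r_d) := below m mk in ex_intro _ r r_d).
  apply: (derivable_justified (derivation_cat ds1 ds)).
  apply: justified_mu => [|m /below_s [r r_s]]; first by rewrite mem_cat f_s1.
  by exists r; rewrite mem_cat r_s orbT.
- by move=> v; apply: (@derivable_justified [::]) => //; apply: justified_nil.
- move=> g gs v w ws _ g_d _ gs_d; have [s ds /andP[g_s gs_s]] := derivable2 g_d gs_d.
  by apply: (derivable_justified ds); apply: justified_cons g_s gs_s.
Qed.

Lemma halts_complete p v y : eval p v y -> halts (rf_code p) (code_seq v) y.
Proof.
move=> /(proj1 eval_evals_derivable) [s ds js].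
by exists (code_seq s); rewrite derivation_code_seq cmem_code ds js.
Qed.

Lemma haltsP p v y : halts (rf_code p) (code_seq v) y <-> eval p v y.
Proof. by split; [apply: halts_sound | apply: halts_complete]. Qed.

(** * Coded paths *)

Section CodedPath.
Variables (ok : pred nat) (e : rel nat).

Definition coded_path i c j :=
  [&& c != 0, chd c == i & ball c (fun k => (iter k ctl c != 0) ==>
    [&& ok (cnth k c), (iter k.+1 ctl c != 0) ==> e (cnth k c) (cnth k.+1 c)
      & (iter k.+1 ctl c == 0) ==> (cnth k c == j)])].

Lemma coded_path_code i x l j : coded_path i (code_seq (x :: l)) j =
  [&& x == i, all ok (x :: l), path e x l & last x l == j].
Proof.
rewrite /coded_path chd_cons (_ : code_seq _ != 0 = true) //.
case: (x == i); rewrite ?andTb ?andFb //.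
have size_xl := size_le_code_seq (x :: l).
apply/ballP/and3P => [xl_ok | [xl_ok xl_path xl_last] k _].
  have {}xl_ok k : k < (size l).+1 -> [&& ok (nth 0 (x :: l) k),
      (k < size l) ==> e (nth 0 (x :: l) k) (nth 0 (x :: l) k.+1)
    & (k == size l) ==> (nth 0 (x :: l) k == j)].
    move=> kl; have := xl_ok k (leq_trans kl size_xl).
    rewrite !iter_ctl_code_neq0 iter_ctl_code_eq0 !cnth_code kl /= ltnS.
    by case/and3P => -> -> kj; apply/implyP => /eqP kl'; apply: (implyP kj); rewrite kl'.
  split.
  - by apply/(all_nthP 0) => k /xl_ok /and3P[].
  - by apply/(pathP 0) => k kl; have /and3P[_ /implyP /(_ kl)] := xl_ok k (ltnW kl).
  - by rewrite -(last_cons 0) -nth_last; case/and3P: (xl_ok _ (ltnSn _)) => _ _; rewrite eqxx.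
apply/implyP; rewrite !iter_ctl_code_neq0 iter_ctl_code_eq0 !cnth_code /= ltnS => kl.
rewrite (all_nthP 0 xl_ok) //=; apply/andP; split; apply/implyP => kl'.
  exact: (pathP 0 xl_path).
have -> : k = size l by lia.
by rewrite -[size l]/((size (x :: l)).-1) nth_last.
Qed.

Definition linked i j := exists x l, [&& x == i, all ok (x :: l), path e x l & last x l == j].

Lemma coded_pathP i j : (exists c, coded_path i c j) <-> linked i j.
Proof.
split=> [[c] | [x [l xl]]]; last by exists (code_seq (x :: l)); rewrite coded_path_code.
have [[|x l] <-] := code_seq_surj c; first by case/and3P.
by rewrite coded_path_code => xl; exists x, l.
Qed.

Lemma linked_sym i j : symmetric e -> linked i j -> linked j i.
Proof.
move=> e_sym [x [l /and4P[/eqP <- xl_ok xl_path /eqP <-]]].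
have rev_xl : last x l :: rev (belast x l) = rcons (rev l) x.
  by rewrite -rev_rcons -lastI rev_cons.
exists (last x l), (rev (belast x l)); rewrite eqxx rev_xl -rev_cons all_rev xl_ok /=.
rewrite -[last (last x l) _](last_cons 0) rev_xl last_rcons eqxx andbT rev_path.
by apply: sub_path xl_path => a b; rewrite /= e_sym.
Qed.
End CodedPath.

Lemma linked_trans ok (e1 e2 e : rel nat) i j k : subrel e1 e -> subrel e2 e ->
  linked ok e1 i j -> linked ok e2 j k -> linked ok e i k.
Proof.
move=> e1e e2e [x [l /and4P[/eqP <- xl_ok xl_path /eqP xl_j]]].
move=> [x' [l' /and4P[/eqP x'_j x'l'_ok x'l'_path /eqP <-]]].
exists x, (l ++ l'); rewrite eqxx last_cat xl_j -x'_j eqxx andbT.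
rewrite cat_path (sub_path e1e xl_path) xl_j -x'_j (sub_path e2e x'l'_path).
by move: xl_ok x'l'_ok; rewrite /= all_cat => /andP[-> ->] /andP[_ ->].
Qed.

Lemma linked_rel (ok : pred nat) (e : rel nat) (G : nat -> nat -> Prop) i j :
  (forall a, G a a) -> (forall a b c, G a b -> G b c -> G a c) ->
  (forall a b, ok a -> ok b -> e a b -> G a b) -> linked ok e i j -> G i j.
Proof.
move=> G_refl G_trans eG [x [l /and4P[/eqP <- xl_ok xl_path /eqP <-]]].
move: (G_refl x) xl_ok xl_path.
elim: l {2 3 4 6}x => //= z l IH y Gxy /and3P[y_ok z_ok l_ok] /andP[yz zl].
by apply: IH; rewrite /= ?z_ok //; apply: G_trans Gxy (eG _ _ y_ok z_ok yz).
Qed.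

(** * An equivalence relation complete for n-tuple reductions *)

(* With [e] coding a program that decides [R] and [cv] coding the tuple [v],
   vertices [a] and [b] are joined at stage [t] when [exists w, R v_a v_b u w]
   holds for every [u < t] with witnesses and derivation codes below [s]. *)
Definition edge e cv t s a b := ball t (fun u => bex s (fun w => bex s (fun d =>
  derivation_code d && cmem (judgment 0 e (code_seq [:: cnth a cv; cnth b cv; u; w]) 1) d))).
Definition edgeS e cv t s a b := edge e cv t s a b || edge e cv t s b a.

Lemma edge_mono e cv t s s' a b : s <= s' -> edge e cv t s a b -> edge e cv t s' a b.
Proof.
move=> ss' /ballP edge_ab; apply/ballP => u ut.
have /bexP [w ws /bexP [d ds dR]] := edge_ab u ut.
by apply/bexP; exists w; [lia | apply/bexP; exists d; first lia].
Qed.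

Lemma edgeS_mono e cv t s s' : s <= s' -> subrel (edgeS e cv t s) (edgeS e cv t s').
Proof. by move=> ss' a b /orP[] /(edge_mono ss') e_ab; rewrite /edgeS e_ab ?orbT. Qed.

Section CompleteRelation.
Variable n : nat.

Definition Ematrix x y t W := (x == y) || [&& nfst x == nfst y, nsnd x < n, nsnd y < n &
  coded_path (fun a => a < n) (edgeS (nfst (nfst x)) (nsnd (nfst x)) t (nfst W))
    (nsnd x) (nsnd W) (nsnd y)].

Definition Erel x y := forall t, exists W, Ematrix x y t W.

Lemma Pi02_Erel : Pi02 Erel.
Proof.
exists Ematrix; split => //.
rewrite /Ematrix /coded_path /edgeS /edge /= /jkind /jprog /jinput /joutput /judgment.
by computable_with ltac:(apply: decidable_derivation_code).
Qed.

Lemma EmatrixP x y t : (exists W, Ematrix x y t W) <-> x = y \/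
  [/\ nfst x = nfst y, nsnd x < n, nsnd y < n & exists s,
     linked (fun a => a < n) (edgeS (nfst (nfst x)) (nsnd (nfst x)) t s) (nsnd x) (nsnd y)].
Proof.
split=> [[W /orP[/eqP-> | /and4P[/eqP xy xn yn xy_path]]] | [->|[xy xn yn [s]]]].
- by left.
- by right; split => //; exists (nfst W); apply/coded_pathP; exists (nsnd W).
- by exists 0; rewrite /Ematrix eqxx.
move=> /coded_pathP [c xy_path]; exists (npair s c).
by rewrite /Ematrix nfst_pair nsnd_pair xy_path xy eqxx xn yn orbT.
Qed.

Lemma Erel_equiv : is_equivalence Erel.
Proof.
split; [|split].
- by move=> x t; apply/EmatrixP; left.
- move=> x y xy t; have /EmatrixP [->|[xy1 xn yn [s xy_path]]] := xy t.
    by apply/EmatrixP; left.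
  apply/EmatrixP; right; split => //; exists s; rewrite -xy1; apply: linked_sym xy_path.
  by move=> a b; rewrite /edgeS orbC.
- move=> x y z xy yz t.
  have /EmatrixP [->|[xy1 xn yn [s xy_path]]] := xy t; first exact: yz t.
  have /EmatrixP [yz0|[yz1 _ zn [s' yz_path]]] := yz t; apply/EmatrixP; right.
    by rewrite -yz0; split => //; exists s.
  split => //; first by rewrite xy1.
  exists (maxn s s'); apply: linked_trans xy_path _; rewrite ?xy1.
  + exact: edgeS_mono (leq_maxl s s').
  + exact: edgeS_mono (leq_maxr s s').
  + exact: yz_path.
Qed.

Lemma Erel_npair c i j : i < n -> j < n -> i != j -> Erel (npair c i) (npair c j) <->
  forall t, exists s, linked (fun a => a < n) (edgeS (nfst c) (nsnd c) t s) i j.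
Proof.
move=> ilt jlt ij; split=> E_ij t.
  have /EmatrixP [/npair_inj [_ /eqP]|[_ _ _]] := E_ij t; first by rewrite (negbTE ij).
  by rewrite !nfst_pair !nsnd_pair.
by apply/EmatrixP; right; rewrite !nfst_pair !nsnd_pair; split.
Qed.
End CompleteRelation.

Lemma exists_bound (P : nat -> nat -> Prop) m :
  (forall x, x < m -> exists y, P x y) -> exists B, forall x, x < m -> exists2 y, y < B & P x y.
Proof.
elim: m => [|m IH] P_m; first by exists 0.
have [B PB] := IH (fun x xm => P_m x (ltnW xm)).
have [y Py] := P_m m (ltnSn _).
exists (maxn B y.+1) => x; rewrite ltnS leq_eqVlt => /orP[/eqP->|xm].
  by exists y => //; lia.
by have [y' y'B Py'] := PB x xm; exists y' => //; lia.
Qed.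

Lemma eval_bool_halts p v (b : bool) :
  eval p v b -> (b <-> halts (rf_code p) (code_seq v) 1).
Proof.
move=> p_b; rewrite haltsP; split=> [b_true|p_1]; first by rewrite b_true in p_b.
by have := eval_det p_b p_1; case: b {p_b}.
Qed.

Section EdgeSemantics.
Variables (R : nat -> nat -> nat -> nat -> bool) (p : rf) (v : seq nat).
Hypothesis p_R : forall w, size w = 4 ->
  eval p w (R (nth 0 w 0) (nth 0 w 1) (nth 0 w 2) (nth 0 w 3)).

Lemma R_halts a b u w : R a b u w <-> halts (rf_code p) (code_seq [:: a; b; u; w]) 1.
Proof. exact: eval_bool_halts (@p_R [:: a; b; u; w] erefl). Qed.

Lemma edge_sound t s a b : edge (rf_code p) (code_seq v) t s a b ->
  forall u, u < t -> exists w, R (nth 0 v a) (nth 0 v b) u w.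
Proof.
move=> /ballP edge_ab u ut; have /bexP [w _ /bexP [d _ dR]] := edge_ab u ut.
by exists w; apply/R_halts; exists d; rewrite -!cnth_code.
Qed.

Lemma edge_complete t a b : (forall u, exists w, R (nth 0 v a) (nth 0 v b) u w) ->
  exists s, edge (rf_code p) (code_seq v) t s a b.
Proof.
move=> R_ab.
have [B RB] : exists B, forall u, u < t -> exists2 y, y < B & exists w d, y = maxn w d /\
    derivation_code d && cmem (judgment 0 (rf_code p)
      (code_seq [:: cnth a (code_seq v); cnth b (code_seq v); u; w]) 1) d.
  apply: exists_bound => u _; have [w /R_halts [d dR]] := R_ab u.
  by exists (maxn w d), w, d; rewrite !cnth_code.
exists B; apply/ballP => u ut; have [y yB [w [d [y_wd dR]]]] := RB u ut.
by apply/bexP; exists w; [lia | apply/bexP; exists d; first lia].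
Qed.
End EdgeSemantics.

Lemma refutation_bound n (P : nat -> nat -> nat -> nat -> Prop) :
  exists T, forall a b, a < n -> b < n -> ~ (forall u, exists w, P a b u w) ->
    exists2 u, u < T & forall w, ~ P a b u w.
Proof.
have [T T_sep] : exists T, forall a, a < n -> exists2 Ta, Ta < T & forall b, b < n ->
    ~ (forall u, exists w, P a b u w) -> exists2 u, u < Ta & forall w, ~ P a b u w.
  apply: exists_bound => a _.
  have [|Ta Ta_sep] := @exists_bound
      (fun b u => ~ (forall u, exists w, P a b u w) -> forall w, ~ P a b u w) n.
    move=> b _; case: (classic (forall u, exists w, P a b u w)) => [all_u|].
      by exists 0 => /(_ all_u).
    by move=> /not_all_ex_not [u no_w]; exists u => _ w Pw; apply: no_w; exists w.
  by exists Ta => b bn nP; have [u uTa /(_ nP)] := Ta_sep b bn; exists u.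
exists T => a b an bn nP; have [Ta TaT /(_ b bn nP) [u uTa no_w]] := T_sep a an.
by exists u => //; apply: ltn_trans uTa TaT.
Qed.

Lemma Erel_complete n F : is_equivalence F -> Pi02 F -> creduces_n n F (Erel n).
Proof.
move=> [F_refl [F_sym F_trans]] [R [[p p_R] F_R]].
exists (fun i v => npair (npair (rf_code p) (code_seq v)) i); split.
  by move=> i _; apply/computable_npair/computable_const/computable_npair;
    [apply: computable_const | apply: computable_code_seq].
move=> v size_v i j ij jn; rewrite Erel_npair ?nfst_pair ?nsnd_pair ?neq_ltn ?ij //; last lia.
set G := fun a b => F (nth 0 v a) (nth 0 v b).
split=> [G_ij t | linked_ij].
  have [s e_ij] := edge_complete p_R t (iffLR (F_R _ _) G_ij).
  exists s; rewrite /linked; exists i, [:: j].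
  by rewrite /= !eqxx jn (ltn_trans ij jn) /edgeS e_ij.
have [T T_sep] := refutation_bound n (fun a b u w => R (nth 0 v a) (nth 0 v b) u w).
have [s linked_T] := linked_ij T.
have edge_G a b : a < n -> b < n -> edge (rf_code p) (code_seq v) T s a b -> G a b.
  move=> an bn e_ab; apply/F_R; apply: NNPP => nR_ab.
  have [u uT no_w] := T_sep a b an bn nR_ab.
  by have [w Rw] := edge_sound p_R e_ab uT; case: (no_w w).
apply: (linked_rel (G := G)) linked_T => [a | a b c | a b an bn /orP[/edge_G | /edge_G]].
- exact: F_refl.
- exact: F_trans.
- exact.
- by move=> G_ba; apply: F_sym; apply: G_ba.
Qed.

(** * A relation defeating every reduction of (n+1)-tuples *)

Fixpoint diag_args c m := if m is m'.+1 then npair c m' :: diag_args c m' else [::].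

Lemma size_diag_args c m : size (diag_args c m) = m.
Proof. by elim: m => //= m ->. Qed.

Lemma nth_diag_args c m k : k < m -> nth 0 (diag_args c m) k = npair c (m.-1 - k).
Proof.
elim: m k => // m IH [|k] km /=; first by rewrite subn0.
by rewrite IH //; case: m IH km => // m _ km; congr npair; lia.
Qed.

Lemma computable_code_diag_args k F m : computable_n k F ->
  computable_n k (fun v => code_seq (diag_args (F v) m)).
Proof.
move=> HF; elim: m => [|m IH]; first exact: computable_const.
exact: computable_ccons (computable_npair HF (computable_const _ _)) IH.
Qed.

Section DiagonalRelation.
Variable n : nat.

(* [W] certifies that the [n.+1] programs coded by [c], run on [diag_args c n.+1],
   halt with pairwise distinct outputs. *)
Definition distinct_outputs c W :=
  [&& derivation_code (nfst W),
      ball n.+1 (fun k => cmem (judgment 0 (cnth k c) (code_seq (diag_args c n.+1))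
        (cnth k (nsnd W))) (nfst W))
    & ball n.+1 (fun k => ball n.+1 (fun l => (k < l) ==> (cnth k (nsnd W) != cnth l (nsnd W))))].

Definition Fmatrix x y (u W : nat) := (x == y) || (nfst x == nfst y) && distinct_outputs (nfst x) W.
Definition Frel x y := forall u, exists W, Fmatrix x y u W.

Lemma FrelE x y : Frel x y <-> x = y \/ nfst x = nfst y /\ exists W, distinct_outputs (nfst x) W.
Proof.
split=> [/(_ 0) [W /orP[/eqP-> | /andP[/eqP xy1 dW]]] | [-> u | [xy1 [W dW]] u]].
- by left.
- by right; split => //; exists W.
- by exists 0; rewrite /Fmatrix eqxx.
by exists W; rewrite /Fmatrix xy1 eqxx -xy1 dW orbT.
Qed.

Lemma Frel_equiv : is_equivalence Frel.
Proof.
split; [|split].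
- by move=> x; apply/FrelE; left.
- move=> x y /FrelE [->|[xy1 dW]]; apply/FrelE; first by left.
  by right; rewrite -xy1; split.
- move=> x y z /FrelE [-> //|[xy1 dW]] /FrelE [<-|[yz1 _]]; apply/FrelE; right; first by split.
  by split; first rewrite xy1.
Qed.

Lemma Pi02_Frel : Pi02 Frel.
Proof.
exists Fmatrix; split => //.
rewrite /Fmatrix /distinct_outputs /jkind /jprog /jinput /joutput /judgment.
computable_with ltac:(first [apply: decidable_derivation_code | apply: computable_code_diag_args]).
Qed.

Lemma distinct_outputsP (ps : seq rf) (ys : nat -> nat) :
  let c := code_seq (map rf_code ps) in size ps = n.+1 ->
  (forall k, k < n.+1 -> eval (nth rZero ps k) (diag_args c n.+1) (ys k)) ->
  (exists W, distinct_outputs c W) <-> (forall k l, k < l -> l < n.+1 -> ys k <> ys l).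
Proof.
move=> c size_ps ps_ys; set V := diag_args c n.+1.
have c_k k : k < n.+1 -> cnth k c = rf_code (nth rZero ps k).
  by move=> kn; rewrite cnth_code (nth_map rZero) ?size_ps.
split=> [[W /and3P[dW /ballP W_ys /ballP W_dist]] k l kl ln | ys_dist].
  have W_k m : m < n.+1 -> cnth m (nsnd W) = ys m.
    move=> mn; apply: eval_det (ps_ys m mn); apply: halts_sound.
    by exists (nfst W); rewrite dW -c_k // W_ys.
  have kn : k < n.+1 by lia.
  rewrite -(W_k k kn) -(W_k l ln); apply/eqP.
  by have /ballP/(_ l ln) := W_dist k kn; rewrite kl.
have [s ds s_ys] : exists2 s, derivation s &
    forall k, k < n.+1 -> judgment 0 (cnth k c) (code_seq V) (ys k) \in s.
  have [|s ds s_ys] := @derivation_collect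
    (fun k _ => judgment 0 (cnth k c) (code_seq V) (ys k)) n.+1.
    by move=> k kn; exists 0; rewrite c_k //; apply: (proj1 eval_evals_derivable); apply: ps_ys.
  by exists s => // k /s_ys [].
set Y := code_seq [seq ys k | k <- iota 0 n.+1].
have Y_k k : k < n.+1 -> cnth k Y = ys k.
  by move=> kn; rewrite cnth_code (nth_map 0) ?size_iota // nth_iota.
exists (npair (code_seq s) Y).
rewrite /distinct_outputs nfst_pair nsnd_pair derivation_code_seq ds /=.
apply/andP; split; apply/ballP => k kn; first by rewrite Y_k // cmem_code s_ys.
by apply/ballP => l ln; apply/implyP => kl; rewrite !Y_k //; apply/eqP; apply: ys_dist.
Qed.
End DiagonalRelation.

Lemma Erel_distinct n x y : Erel n x y -> x <> y -> [/\ nfst x = nfst y, nsnd x < n & nsnd y < n].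
Proof. by move=> /(_ 0) /EmatrixP [//|[]]. Qed.

Lemma Erel_no_large_clique n (y : nat -> nat) : 0 < n ->
  ~ (forall k l, k < l -> l < n.+1 -> Erel n (y k) (y l) /\ y k <> y l).
Proof.
move=> n_gt0 clique.
have y_ok k : k < n.+1 -> nfst (y k) = nfst (y 0) /\ nsnd (y k) < n.
  case: k => [_|k kn].
    by have [E01 ne01] := clique 0 1 isT n_gt0; case: (Erel_distinct E01 ne01).
  by have [E0k ne0k] := clique 0 k.+1 isT kn; case: (Erel_distinct E0k ne0k).
have : uniq [seq nsnd (y k) | k <- iota 0 n.+1].
  rewrite map_inj_in_uniq ?iota_uniq // => k l; rewrite !mem_iota !add0n => kn ln snd_kl.
  have y_kl : y k = y l.
    by rewrite -(npairK (y k)) -(npairK (y l)) snd_kl (y_ok k kn).1 (y_ok l ln).1.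
  case: (ltngtP k l) => // [kl | lk]; first by have [_] := clique k l kl ln.
  by have [_] := clique l k lk kn; rewrite y_kl.
move/uniq_leq_size => /(_ (iota 0 n)); rewrite size_map !size_iota ltnn => /(_ _)/notF; apply.
by move=> z /mapP [k]; rewrite mem_iota add0n => kn ->; rewrite mem_iota (y_ok k kn).2.
Qed.

Lemma seq_choice T (x0 : T) (P : nat -> T -> Prop) m : (forall i, i < m -> exists x, P i x) ->
  exists2 xs, size xs = m & forall i, i < m -> P i (nth x0 xs i).
Proof.
elim: m => [|m IH] P_m; first by exists [::].
have [xs size_xs P_xs] := IH (fun i im => P_m i (ltnW im)).
have [x Px] := P_m m (ltnSn _).
exists (rcons xs x) => [|i]; first by rewrite size_rcons size_xs.
rewrite ltnS leq_eqVlt nth_rcons size_xs => /orP[/eqP-> | im]; first by rewrite ltnn eqxx.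
by rewrite im; apply: P_xs.
Qed.

Lemma Erel_not_complete n : 0 < n -> ~ complete_n n.+1 (Erel n).
Proof.
move=> n_gt0 [_ E_complete].
have [f [f_comp f_red]] := E_complete (Frel n) (Frel_equiv n) (Pi02_Frel n).
have [ps size_ps ps_f] := seq_choice rZero f_comp.
set c := code_seq (map rf_code ps); set V := diag_args c n.+1.
have size_V : size V = n.+1 by rewrite size_diag_args.
have ps_V k : k < n.+1 -> eval (nth rZero ps k) V (f k V) by move=> kn; apply: ps_f.
have Frel_V k l : k < l -> l < n.+1 ->
    Frel n (nth 0 V k) (nth 0 V l) <-> exists W, distinct_outputs n c W.
  move=> kl ln; have kn : k < n.+1 by lia.
  rewrite FrelE !nth_diag_args // !nfst_pair.
  by split=> [[/npair_inj [_ kl'] | [_ dW]] // | dW]; [lia | right].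
have [dW | no_dW] := classic (exists W, distinct_outputs n c W).
  apply: (Erel_no_large_clique (y := f^~ V) n_gt0) => k l kl ln; split.
    by apply/(f_red V size_V k l kl ln)/Frel_V.
  by move: kl ln; apply: (distinct_outputsP size_ps ps_V).1.
apply: (no_dW); apply/(distinct_outputsP size_ps ps_V) => k l kl ln f_kl; apply: no_dW.
apply/(Frel_V k l kl ln)/(f_red V size_V k l kl ln); rewrite f_kl.
by case: (Erel_equiv n).
Qed.

Theorem theorem4p8 :
  forall n : nat, 1 < n ->
    exists E : nat -> nat -> Prop,
      is_equivalence E /\ Pi02 E /\ complete_n n E /\ ~ complete_n n.+1 E.
Proof.
move=> n n_gt1; exists (Erel n); split; first exact: Erel_equiv.
split; first exact: Pi02_Erel.
split; first by split; [apply: Pi02_Erel | move=> F F_equiv F_Pi02; apply: Erel_complete].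
by apply: Erel_not_complete; lia.
Qed.
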